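(* For every $\widehat r\in\mathbb{N}$ and every $m\ge1$, \[\mathrm{Var}(\mu^{(b^m\widehat r+1)})=\Big(1-\frac1{b^m}\Big)\mathrm{Var}(\mu^{(\widehat r)})+\frac1{b^m}\mathrm{Var}(\mu^{(\widehat r+1)})+b-\frac1{b^{m-1}}.\]
   Context: Fix an integer $b\ge2$. For $n\in\mathbb{N}$ with base-$b$ digits $n_k$, $s(n):=\sum_kn_k$. For $r,n\in\mathbb{N}$, $\Delta^{(r)}(n):=s(n+r)-s(n)$, and $\mu^{(r)}(d):=\lim_{N\to\infty}\frac1N|\{n<N:\Delta^{(r)}(n)=d\}|$ for $d\in\mathbb{Z}$; these limits exist and $\mu^{(r)}$ is a probability measure on $\mathbb{Z}$ with finite moments. $\mathrm{Var}(\mu^{(r)})$ is its variance. *)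

From Stdlib Require Import Reals Lra Lia ZArith Arith List.
From Coquelicot Require Import Coquelicot.
Open Scope R_scope.

(* Base-b digit sum s(n) = sum_k n_k, computed with fuel; for b >= 2,
   fuel n suffices since n / b < n for n > 0. *)
Fixpoint digsum_aux (b fuel n : nat) : nat :=
  match fuel with
  | O => O
  | S f => (n mod b + digsum_aux b f (n / b))%nat
  end.

Definition digsum (b n : nat) : nat := digsum_aux b n n.

Definition Delta (b r n : nat) : Z :=
  (Z.of_nat (digsum b (n + r)) - Z.of_nat (digsum b n))%Z.

Definition count_Delta (b r : nat) (d : Z) (N : nat) : nat :=
  length (filter (fun n => Z.eqb (Delta b r n) d) (seq 0 N)).

Definition mu (b r : nat) (d : Z) : R :=
  real (Lim_seq (fun N => INR (count_Delta b r d N) / INR N)).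

Definition sumZ (f : Z -> R) : R :=
  Series (fun k => f (Z.of_nat k)) + Series (fun k => f (- Z.of_nat k - 1)%Z).

Definition VarMu (m : Z -> R) : R :=
  sumZ (fun d => (IZR d) ^ 2 * m d) - (sumZ (fun d => IZR d * m d)) ^ 2.

(* Write r = b^m r' + t and n = b^m q + a with a < b^m.  The digit sum splits into a
   low and a high block, so Delta^(r)(n) = e(a) + Delta^(r' + c(a))(q), where
   c(a) = (a + t) / b^m is the carry out of the low block and e(a) is the change of
   its digit sum.  Averaging over the residue a, mu^(r) is the uniform mixture over a
   of the translates by e(a) of the measures mu^(r' + c(a)).  The shifts e(a) sum to
   zero (they are differences of digit sums under a rotation of the residues), so by
   strong induction on r (with b^1 blocks) every mu^(r) is a probability measure of
   mean 0 with finite second moment; the base case mu^(1) satisfies a recursion in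
   d that forces a geometric left tail.  For t = 1 only a = b^m - 1 carries, hence
   the variance of mu^(b^m rh + 1) is the (1 - b^-m, b^-m) average of the variances
   of mu^(rh) and mu^(rh + 1) plus the mean of e(a)^2; the latter does not depend on
   rh and is read off from the case rh = 0, where Var mu^(0) = 0 and Var mu^(1) = b. *)

From Pilot Require Import Defs.
From Stdlib Require Import Reals.
From Coquelicot Require Import Coquelicot.
Open Scope R_scope.
From Stdlib Require Import Lra Lia ZArith Arith List.
(* Stdlib's [Reals] also exports a [Delta]; re-import ours to shadow it. *)
Import Defs.

(** * Finite sums and averages *)

Fixpoint rsum (f : nat -> R) (n : nat) : R :=
  match n with O => 0 | S k => rsum f k + f k end.

Lemma rsum_ext f g n : (forall i, (i < n)%nat -> f i = g i) -> rsum f n = rsum g n.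
Proof. induction n as [|n IH]; simpl; intros H; [reflexivity|]. rewrite IH, H; auto. Qed.

Lemma rsum_plus f g n : rsum (fun i => f i + g i) n = rsum f n + rsum g n.
Proof. induction n; simpl; lra. Qed.

Lemma rsum_minus f g n : rsum (fun i => f i - g i) n = rsum f n - rsum g n.
Proof. induction n; simpl; lra. Qed.

Lemma rsum_scal c f n : rsum (fun i => c * f i) n = c * rsum f n.
Proof. induction n; simpl; lra. Qed.

Lemma rsum_const c n : rsum (fun _ => c) n = INR n * c.
Proof. induction n as [|n IH]; [simpl; ring|]. rewrite S_INR. simpl. rewrite IH. ring. Qed.

Lemma rsum_add f n k : rsum f (n + k) = rsum f n + rsum (fun i => f (n + i)%nat) k.
Proof.
  induction k as [|k IH]; [rewrite Nat.add_0_r; simpl; ring|].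
  rewrite Nat.add_succ_r. simpl. rewrite IH. ring.
Qed.

Lemma rsum_shift1 f n : rsum f (S n) = f O + rsum (fun i => f (S i)) n.
Proof. induction n as [|n IH]; [simpl; ring|]. simpl in *. rewrite IH. ring. Qed.

Lemma rsum_split_last f g B : (0 < B)%nat ->
  (forall a, (a < B - 1)%nat -> f a = g a) -> rsum f B = rsum g (B - 1) + f (B - 1)%nat.
Proof.
  intros HB Hfg. destruct B as [|B]; [lia|].
  rewrite Nat.sub_succ, Nat.sub_0_r in *. simpl. f_equal. apply rsum_ext. assumption.
Qed.

Lemma rsum_block f B M :
  rsum f (B * M) = rsum (fun a => rsum (fun q => f (B * q + a)%nat) M) B.
Proof.
  induction M as [|M IH].
  - rewrite Nat.mul_0_r. simpl. rewrite rsum_const. ring.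
  - rewrite Nat.mul_succ_r, rsum_add, IH. simpl. rewrite rsum_plus. reflexivity.
Qed.

Lemma rsum_rot h B t : (0 < B)%nat ->
  rsum (fun a => h ((a + t) mod B)%nat) B = rsum h B.
Proof.
  intros HB. induction t as [|t IH].
  - apply rsum_ext. intros i Hi. rewrite Nat.add_0_r, Nat.mod_small by lia. reflexivity.
  - rewrite <- IH. destruct B as [|B]; [lia|].
    rewrite (rsum_shift1 (fun a => h ((a + t) mod S B)%nat)).
    change (rsum ?f (S B)) with (rsum f B + f B). rewrite Rplus_comm. f_equal.
    + replace (B + S t)%nat with (t + 1 * S B)%nat by lia.
      rewrite Nat.Div0.mod_add. reflexivity.
    + apply rsum_ext. intros i Hi. do 2 f_equal. lia.
Qed.

Lemma rsum_bounds f n : (forall i, 0 <= f i <= 1) -> 0 <= rsum f n <= INR n.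
Proof.
  intros Hf. induction n as [|n IH]; [simpl; lra|].
  rewrite S_INR. simpl. specialize (Hf n). lra.
Qed.

Definition avg (f : nat -> R) (N : nat) : R := rsum f N / INR N.

Lemma avg_bounds f N : (forall i, 0 <= f i <= 1) -> 0 <= avg f N <= 1.
Proof.
  intros Hf. pose proof (rsum_bounds f N Hf). unfold avg.
  destruct N as [|N]; [simpl; unfold Rdiv; rewrite Rmult_0_l; lra|].
  assert (0 < INR (S N)) by (apply lt_0_INR; lia).
  split; [apply Rdiv_le_0_compat; lra|].
  apply -> Rdiv_le_1; lra.
Qed.

Lemma avg_block f B M :
  avg f (B * M) = / INR B * rsum (fun a => avg (fun q => f (B * q + a)%nat) M) B.
Proof.
  unfold avg. rewrite rsum_block, mult_INR, <- rsum_scal.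
  unfold Rdiv. rewrite Rmult_comm, <- rsum_scal. apply rsum_ext. intros a _.
  rewrite Rinv_mult. ring.
Qed.

Lemma is_lim_seq_rsum (u : nat -> nat -> R) (L : nat -> R) n :
  (forall a, (a < n)%nat -> is_lim_seq (u a) (L a)) ->
  is_lim_seq (fun M => rsum (fun a => u a M) n) (rsum L n).
Proof.
  induction n as [|n IH]; intros H; simpl.
  - apply is_lim_seq_const.
  - apply is_lim_seq_plus'; [apply IH; auto|apply H; lia].
Qed.

Lemma is_lim_seq_le_div_INR (c : R) (u : nat -> R) :
  (forall N, (0 < N)%nat -> 0 <= u N <= c / INR N) -> is_lim_seq u 0.
Proof.
  intros H. apply is_lim_seq_le_le_loc with (u := fun _ => 0) (w := fun N => c * / INR N).
  - exists 1%nat. intros N HN. apply H. lia.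
  - apply is_lim_seq_const.
  - replace (Finite 0) with (Rbar_mult c (Rbar_inv p_infty)) by (simpl; f_equal; ring).
    apply is_lim_seq_scal_l, is_lim_seq_inv; [apply is_lim_seq_INR|discriminate].
Qed.

Section AverageResidues.
Variables (f : nat -> R) (B : nat).
Hypothesis Hf : forall n, 0 <= f n <= 1.
Hypothesis HB : (0 < B)%nat.

Lemma is_lim_seq_multiple_below_ratio :
  is_lim_seq (fun N => INR (B * (N / B)) / INR N) 1.
Proof.
  apply is_lim_seq_ext_loc with (u := fun N => 1 - INR (N mod B) / INR N).
  - exists 1%nat. intros N HN.
    assert (Hsplit : INR (B * (N / B)) = INR N - INR (N mod B)).
    { rewrite (Nat.div_mod N B) at 2 by lia. rewrite plus_INR. ring. }
    rewrite Hsplit. field. apply not_0_INR. lia.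
  - replace (Finite 1) with (Rbar_minus 1 0) by (simpl; f_equal; ring).
    apply is_lim_seq_minus'; [apply is_lim_seq_const|].
    apply (is_lim_seq_le_div_INR (INR B)). intros N HN.
    pose proof (Nat.mod_upper_bound N B ltac:(lia)).
    split; [apply Rdiv_le_0_compat; [apply pos_INR|apply lt_0_INR; lia]|].
    apply Rmult_le_compat_r; [left; apply Rinv_0_lt_compat, lt_0_INR; lia|].
    apply le_INR. lia.
Qed.

Lemma is_lim_seq_rsum_above_multiple :
  is_lim_seq (fun N => (rsum f N - rsum f (B * (N / B))) / INR N) 0.
Proof.
  apply (is_lim_seq_le_div_INR (INR B)). intros N HN.
  assert (Hrem : rsum f N - rsum f (B * (N / B))
                 = rsum (fun i => f (B * (N / B) + i)%nat) (N mod B)).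
  { rewrite (Nat.div_mod N B) at 1 by lia. rewrite rsum_add. ring. }
  rewrite Hrem.
  pose proof (rsum_bounds (fun i => f (B * (N / B) + i)%nat) (N mod B) (fun i => Hf _)).
  pose proof (Nat.mod_upper_bound N B ltac:(lia)).
  assert (INR (N mod B) <= INR B) by (apply le_INR; lia).
  assert (0 < INR N) by (apply lt_0_INR; lia).
  split; [apply Rdiv_le_0_compat; lra|].
  apply Rmult_le_compat_r; [left; apply Rinv_0_lt_compat|]; lra.
Qed.

(* Compare [N] with the largest multiple [B * (N / B)] of [B] below it. *)
Lemma is_lim_seq_avg_of_multiples (l : R) :
  is_lim_seq (fun M => avg f (B * M)) l -> is_lim_seq (avg f) l.
Proof.
  intros Hmult.
  assert (Hsub : is_lim_seq (fun N => avg f (B * (N / B))) l).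
  { apply (is_lim_seq_subseq (fun M => avg f (B * M)) l (fun N => N / B)%nat); auto.
    intros P [N0 HN0]. exists (N0 * B)%nat. intros n Hn. apply HN0.
    apply Nat.div_le_lower_bound; lia. }
  apply is_lim_seq_ext_loc with
    (u := fun N => avg f (B * (N / B)) * (INR (B * (N / B)) / INR N)
                   + (rsum f N - rsum f (B * (N / B))) / INR N).
  - exists 1%nat. intros N HN. unfold avg.
    assert (INR N <> 0) by (apply not_0_INR; lia).
    destruct (Nat.eq_dec (B * (N / B)) 0) as [E|E].
    + rewrite E. simpl. unfold Rdiv. ring.
    + field. split; [assumption|apply not_0_INR; assumption].
  - replace (Finite l) with (Finite (l * 1 + 0)) by (f_equal; ring).
    apply is_lim_seq_plus'; [apply is_lim_seq_mult'|].
    + exact Hsub.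
    + exact is_lim_seq_multiple_below_ratio.
    + exact is_lim_seq_rsum_above_multiple.
Qed.

Lemma is_lim_seq_avg_residues (L : nat -> R) :
  (forall a, (a < B)%nat -> is_lim_seq (avg (fun q => f (B * q + a)%nat)) (L a)) ->
  is_lim_seq (avg f) (/ INR B * rsum L B).
Proof.
  intros HL. apply is_lim_seq_avg_of_multiples.
  apply (is_lim_seq_ext (fun M => / INR B * rsum (fun a => avg (fun q => f (B * q + a)%nat) M) B)).
  { intros M. symmetry. apply avg_block. }
  apply (is_lim_seq_scal_l _ _ (rsum L B)), is_lim_seq_rsum. assumption.
Qed.

End AverageResidues.

(** * Sums over the integers and moments *)

Definition summableZ (f : Z -> R) : Prop :=
  ex_series (fun k => f (Z.of_nat k)) /\ ex_series (fun k => f (- Z.of_nat k - 1)%Z).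

Lemma ex_series_0 : ex_series (fun _ : nat => 0).
Proof.
  apply (ex_series_ext (fun n => 0 * (/ 2) ^ n)); [intros n; simpl; ring|].
  apply (ex_series_scal_l (V := R_NormedModule) 0 (fun n => (/ 2) ^ n)), ex_series_geom.
  rewrite Rabs_right; lra.
Qed.

Lemma Series_0 : Series (fun _ : nat => 0) = 0.
Proof. rewrite (Series_ext _ (fun n => 0 * 0)), Series_scal_l; [ring|intros; ring]. Qed.

Lemma ex_series_eventually_0 (a : nat -> R) N :
  (forall n, (N <= n)%nat -> a n = 0) -> ex_series a.
Proof.
  intros H. apply (ex_series_incr_n a N).
  apply (ex_series_ext (fun _ => 0)); [|apply ex_series_0].
  intros n. symmetry. apply H. lia.
Qed.

Lemma summableZ_ext f g : (forall d, f d = g d) -> summableZ f -> summableZ g.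
Proof.
  intros H [Hp Hn]. split; [apply (ex_series_ext _ _ (fun k => H _) Hp)|].
  apply (ex_series_ext _ _ (fun k => H _) Hn).
Qed.

Lemma sumZ_ext f g : (forall d, f d = g d) -> sumZ f = sumZ g.
Proof. intros H. unfold sumZ. rewrite !(Series_ext _ _ (fun k => H _)). reflexivity. Qed.

Lemma summableZ_plus f g : summableZ f -> summableZ g -> summableZ (fun d => f d + g d).
Proof. intros [] []. split; apply (ex_series_plus (V := R_NormedModule)); assumption. Qed.

Lemma sumZ_plus f g : summableZ f -> summableZ g ->
  sumZ (fun d => f d + g d) = sumZ f + sumZ g.
Proof. intros [] []. unfold sumZ. rewrite !Series_plus by assumption. ring. Qed.

Lemma summableZ_scal c f : summableZ f -> summableZ (fun d => c * f d).
Proof. intros []. split; apply (ex_series_scal_l (V := R_NormedModule)); assumption. Qed.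

Lemma sumZ_scal c f : sumZ (fun d => c * f d) = c * sumZ f.
Proof. unfold sumZ. rewrite !Series_scal_l. ring. Qed.

Lemma summableZ_shift1 f : summableZ f <-> summableZ (fun d => f (d + 1)%Z).
Proof.
  unfold summableZ. rewrite (ex_series_incr_1 (fun k => f (Z.of_nat k))).
  rewrite (ex_series_incr_1 (fun k => f (- Z.of_nat k - 1 + 1)%Z)).
  assert (Ep : forall k, f (Z.of_nat (S k)) = f (Z.of_nat k + 1)%Z) by (intros; f_equal; lia).
  assert (En : forall k, f (- Z.of_nat k - 1)%Z = f (- Z.of_nat (S k) - 1 + 1)%Z)
    by (intros; f_equal; lia).
  split; intros [Hp Hn]; split.
  - exact (ex_series_ext _ _ Ep Hp).
  - exact (ex_series_ext _ _ En Hn).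
  - exact (ex_series_ext _ _ (fun k => eq_sym (Ep k)) Hp).
  - exact (ex_series_ext _ _ (fun k => eq_sym (En k)) Hn).
Qed.

Lemma sumZ_shift1 f : summableZ f -> sumZ (fun d => f (d + 1)%Z) = sumZ f.
Proof.
  intros Hf. pose proof Hf as [Hp Hn]. apply summableZ_shift1 in Hf as [_ Hn1].
  unfold sumZ. rewrite (Series_incr_1 (fun k => f (Z.of_nat k))) by assumption.
  rewrite (Series_incr_1 (fun k => f (- Z.of_nat k - 1 + 1)%Z)) by assumption.
  rewrite (Series_ext (fun k => f (Z.of_nat (S k))) (fun k => f (Z.of_nat k + 1)%Z))
    by (intros; f_equal; lia).
  rewrite (Series_ext (fun k => f (- Z.of_nat (S k) - 1 + 1)%Z) (fun k => f (- Z.of_nat k - 1)%Z))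
    by (intros; f_equal; lia).
  simpl. ring.
Qed.

Lemma sumZ_shift e f : summableZ f ->
  summableZ (fun d => f (d + e)%Z) /\ sumZ (fun d => f (d + e)%Z) = sumZ f.
Proof.
  revert f. induction e as [|e IH|e IH] using Z.peano_ind; intros f Hf.
  - split; [apply (summableZ_ext f); [|exact Hf]|apply sumZ_ext];
      intros d; rewrite Z.add_0_r; reflexivity.
  - destruct (IH f Hf) as [He Se].
    assert (Hshift : forall d, f (d + Z.succ e)%Z = f (d + 1 + e)%Z) by (intros; f_equal; lia).
    split.
    + apply (summableZ_ext _ _ (fun d => eq_sym (Hshift d))).
      apply -> (summableZ_shift1 (fun d => f (d + e)%Z)). exact He.
    + rewrite (sumZ_ext _ _ Hshift), <- Se. apply (sumZ_shift1 (fun d => f (d + e)%Z)), He.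
  - destruct (IH f Hf) as [He Se].
    set (g := fun d => f (d + Z.pred e)%Z).
    assert (Hg : forall d, g (d + 1)%Z = f (d + e)%Z) by (intros; unfold g; f_equal; lia).
    assert (Hgs : summableZ g).
    { apply (summableZ_shift1 g), (summableZ_ext _ _ (fun d => eq_sym (Hg d))), He. }
    split; [exact Hgs|].
    rewrite <- Se, <- (sumZ_ext _ _ Hg). symmetry. apply sumZ_shift1, Hgs.
Qed.

Lemma sumZ_point f : (forall d, d <> 0%Z -> f d = 0) -> summableZ f /\ sumZ f = f 0%Z.
Proof.
  intros H.
  assert (Hp : ex_series (fun k => f (Z.of_nat k))) by (apply (ex_series_eventually_0 _ 1); intros; apply H; lia).
  assert (Hn : ex_series (fun k => f (- Z.of_nat k - 1)%Z)) by (apply (ex_series_eventually_0 _ 0); intros; apply H; lia).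
  split; [split; assumption|]. unfold sumZ.
  rewrite Series_incr_1 by assumption.
  rewrite (Series_ext (fun k => f (Z.of_nat (S k))) (fun _ => 0)) by (intros; apply H; lia).
  rewrite (Series_ext (fun k => f (- Z.of_nat k - 1)%Z) (fun _ => 0)) by (intros; apply H; lia).
  rewrite Series_0. simpl. ring.
Qed.

Lemma sumZ_rsum (g : nat -> Z -> R) n : (forall a, (a < n)%nat -> summableZ (g a)) ->
  summableZ (fun d => rsum (fun a => g a d) n) /\
  sumZ (fun d => rsum (fun a => g a d) n) = rsum (fun a => sumZ (g a)) n.
Proof.
  induction n as [|n IH]; intros H; simpl.
  - apply (sumZ_point (fun _ => 0)). reflexivity.
  - destruct IH as [IHs IHe]; [intros; apply H; lia|].
    assert (Hn : summableZ (g n)) by (apply H; lia).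
    split; [apply summableZ_plus; assumption|].
    rewrite (sumZ_plus (fun d => rsum (fun a => g a d) n) (g n)), IHe by assumption. reflexivity.
Qed.

Definition finite_moments (F : Z -> R) : Prop :=
  summableZ F /\ summableZ (fun d => IZR d * F d) /\ summableZ (fun d => IZR d ^ 2 * F d).

Definition mass (F : Z -> R) : R := sumZ F.
Definition first_moment (F : Z -> R) : R := sumZ (fun d => IZR d * F d).
Definition second_moment (F : Z -> R) : R := sumZ (fun d => IZR d ^ 2 * F d).

Lemma sumZ_translate e g : summableZ g ->
  summableZ (fun d => g (d - e)%Z) /\ sumZ (fun d => g (d - e)%Z) = sumZ g.
Proof.
  intros Hg. destruct (sumZ_shift (- e) g Hg) as [Hs Hsum].
  assert (E : forall d, g (d + - e)%Z = g (d - e)%Z) by (intros; f_equal; lia).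
  split; [exact (summableZ_ext _ _ E Hs)|]. rewrite <- (sumZ_ext _ _ E). exact Hsum.
Qed.

Lemma moments_translate F e : finite_moments F ->
  let G := fun d => F (d - e)%Z in
  finite_moments G /\ mass G = mass F /\
  first_moment G = first_moment F + IZR e * mass F /\
  second_moment G = second_moment F + 2 * IZR e * first_moment F + IZR e ^ 2 * mass F.
Proof.
  intros [H0 [H1 H2]] G.
  set (g1 := fun d => IZR d * F d + IZR e * F d).
  set (g2 := fun d => IZR d ^ 2 * F d + (2 * IZR e * (IZR d * F d) + IZR e ^ 2 * F d)).
  assert (S1 : summableZ g1) by (apply summableZ_plus, summableZ_scal; assumption).
  assert (S2 : summableZ g2)
    by (apply summableZ_plus; [|apply summableZ_plus; apply summableZ_scal]; assumption).
  assert (E1 : forall d, g1 (d - e)%Z = IZR d * G d).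
  { intros d. unfold g1, G. rewrite minus_IZR. ring. }
  assert (E2 : forall d, g2 (d - e)%Z = IZR d ^ 2 * G d).
  { intros d. unfold g2, G. rewrite minus_IZR. ring. }
  destruct (sumZ_translate e F H0) as [T0 U0].
  destruct (sumZ_translate e g1 S1) as [T1 U1].
  destruct (sumZ_translate e g2 S2) as [T2 U2].
  split; [|split; [|split]].
  - split; [exact T0|split; [exact (summableZ_ext _ _ E1 T1)|exact (summableZ_ext _ _ E2 T2)]].
  - exact U0.
  - unfold first_moment. rewrite <- (sumZ_ext _ _ E1), U1. unfold g1.
    rewrite sumZ_plus, sumZ_scal by (try apply summableZ_scal; assumption). reflexivity.
  - unfold second_moment. rewrite <- (sumZ_ext _ _ E2), U2. unfold g2.
    rewrite sumZ_plus, sumZ_plus, !sumZ_scal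
      by (try apply summableZ_plus; try apply summableZ_scal; assumption).
    unfold first_moment, mass. ring.
Qed.

Lemma moments_mixture (F : nat -> Z -> R) (e : nat -> Z) (B : nat) (G : Z -> R) :
  (forall d, G d = / INR B * rsum (fun a => F a (d - e a)%Z) B) ->
  (forall a, (a < B)%nat -> finite_moments (F a)) ->
  finite_moments G /\
  mass G = / INR B * rsum (fun a => mass (F a)) B /\
  first_moment G = / INR B * rsum (fun a => first_moment (F a) + IZR (e a) * mass (F a)) B /\
  second_moment G = / INR B * rsum (fun a => second_moment (F a)
     + 2 * IZR (e a) * first_moment (F a) + IZR (e a) ^ 2 * mass (F a)) B.
Proof.
  intros HG HF.
  assert (Ht : forall a, (a < B)%nat -> _) by (intros a Ha; exact (moments_translate (F a) (e a) (HF a Ha))).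
  destruct (sumZ_rsum (fun a d => F a (d - e a)%Z) B) as [A0 B0].
  { intros a Ha. destruct (Ht a Ha) as [[? _] _]. assumption. }
  destruct (sumZ_rsum (fun a d => IZR d * F a (d - e a)%Z) B) as [A1 B1].
  { intros a Ha. destruct (Ht a Ha) as [[_ [? _]] _]. assumption. }
  destruct (sumZ_rsum (fun a d => IZR d ^ 2 * F a (d - e a)%Z) B) as [A2 B2].
  { intros a Ha. destruct (Ht a Ha) as [[_ [_ ?]] _]. assumption. }
  assert (G1 : forall d, / INR B * rsum (fun a => IZR d * F a (d - e a)%Z) B = IZR d * G d)
    by (intros d; rewrite HG, rsum_scal; ring).
  assert (G2 : forall d, / INR B * rsum (fun a => IZR d ^ 2 * F a (d - e a)%Z) B = IZR d ^ 2 * G d)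
    by (intros d; rewrite HG, rsum_scal; ring).
  assert (G0 : forall d, / INR B * rsum (fun a => F a (d - e a)%Z) B = G d)
    by (intros d; rewrite HG; reflexivity).
  split; [|split; [|split]].
  - split; [|split].
    + exact (summableZ_ext _ _ G0 (summableZ_scal _ _ A0)).
    + exact (summableZ_ext _ _ G1 (summableZ_scal _ _ A1)).
    + exact (summableZ_ext _ _ G2 (summableZ_scal _ _ A2)).
  - unfold mass. rewrite <- (sumZ_ext _ _ G0), sumZ_scal, B0. f_equal.
    apply rsum_ext. intros a Ha. destruct (Ht a Ha) as [_ [? _]]. assumption.
  - unfold first_moment. rewrite <- (sumZ_ext _ _ G1), sumZ_scal, B1. f_equal.
    apply rsum_ext. intros a Ha. destruct (Ht a Ha) as [_ [_ [? _]]]. assumption.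
  - unfold second_moment. rewrite <- (sumZ_ext _ _ G2), sumZ_scal, B2. f_equal.
    apply rsum_ext. intros a Ha. destruct (Ht a Ha) as [_ [_ [_ ?]]]. assumption.
Qed.

Lemma ex_series_sq_geom rho : 0 < rho < 1 -> ex_series (fun n => (INR n + 1) ^ 2 * rho ^ n).
Proof.
  intros Hrho.
  assert (Hpos : forall n, 0 < (INR n + 1) ^ 2 * rho ^ n)
    by (intros n; pose proof (pos_INR n); apply Rmult_lt_0_compat; apply pow_lt; lra).
  apply (ex_series_ext (fun n => Rabs ((INR n + 1) ^ 2 * rho ^ n))).
  { intros n. apply Rabs_right. apply Rle_ge. left. apply Hpos. }
  apply (ex_series_DAlembert _ rho); [lra|intros n; apply Rgt_not_eq, Hpos|].
  apply is_lim_seq_ext with (u := fun n => rho * (1 + / (INR n + 1)) ^ 2).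
  - intros n. pose proof (pos_INR n). pose proof (pow_lt rho n ltac:(lra)).
    rewrite Rabs_right by (apply Rle_ge, Rdiv_le_0_compat; [left; apply (Hpos (S n))|apply Hpos]).
    rewrite S_INR. simpl. field. lra.
  - assert (Hinv : is_lim_seq (fun n => / (INR n + 1)) 0).
    { apply (is_lim_seq_le_div_INR 1). intros N HN. pose proof (pos_INR N).
      split; [left; apply Rinv_0_lt_compat; lra|].
      unfold Rdiv. rewrite Rmult_1_l. apply Rinv_le_contravar; [apply lt_0_INR; lia|lra]. }
    replace (Finite rho) with (Finite (rho * (1 + 0) ^ 2)) by (f_equal; ring).
    apply (is_lim_seq_scal_l _ rho ((1 + 0) ^ 2)). simpl.
    assert (H1 : is_lim_seq (fun n => 1 + / (INR n + 1)) (1 + 0))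
      by (apply is_lim_seq_plus'; [apply is_lim_seq_const|exact Hinv]).
    apply is_lim_seq_mult'; [exact H1|apply is_lim_seq_mult'; [exact H1|apply is_lim_seq_const]].
Qed.

Lemma summableZ_of_tail (g : Z -> R) (rho : R) (N : nat) : 0 < rho < 1 ->
  (forall d, (Z.of_nat N <= d)%Z -> g d = 0) ->
  (forall k, Rabs (g (- Z.of_nat k - 1)%Z) <= (INR k + 1) ^ 2 * rho ^ k) ->
  summableZ g.
Proof.
  intros Hrho Hright Hleft. split.
  - apply (ex_series_eventually_0 _ N). intros n Hn. apply Hright. lia.
  - apply (ex_series_le (V := R_CompleteNormedModule) _ _ Hleft), ex_series_sq_geom, Hrho.
Qed.

(* [|d| = k + 1 >= 1] at [d = - k - 1], so each weight [|d|^j], [j <= 2], is at most [(k+1)^2]. *)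
Lemma finite_moments_of_tail (F : Z -> R) (rho : R) (N : nat) : 0 < rho < 1 ->
  (forall d, 0 <= F d) -> (forall d, (Z.of_nat N <= d)%Z -> F d = 0) ->
  (forall k, F (- Z.of_nat k - 1)%Z <= rho ^ k) -> finite_moments F.
Proof.
  intros Hrho Hpos Hright Hleft.
  assert (Hweight : forall (w : Z -> R) k, Rabs (w (- Z.of_nat k - 1)%Z) <= (INR k + 1) ^ 2 ->
            Rabs (w (- Z.of_nat k - 1)%Z * F (- Z.of_nat k - 1)%Z) <= (INR k + 1) ^ 2 * rho ^ k).
  { intros w k Hw. rewrite Rabs_mult, (Rabs_right (F _)) by (apply Rle_ge, Hpos).
    apply Rmult_le_compat; [apply Rabs_pos|apply Hpos|exact Hw|apply Hleft]. }
  assert (Hk : forall k, IZR (- Z.of_nat k - 1) = - (INR k + 1))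
    by (intros k; rewrite minus_IZR, opp_IZR, <- INR_IZR_INZ; ring).
  assert (Hk1 : forall k, 1 <= INR k + 1) by (intros k; pose proof (pos_INR k); lra).
  split; [|split].
  - apply (summableZ_of_tail _ rho N Hrho Hright). intros k.
    rewrite <- (Rmult_1_l (F _)). apply (Hweight (fun _ => 1)).
    rewrite Rabs_R1. specialize (Hk1 k). nra.
  - apply (summableZ_of_tail _ rho N Hrho); [intros d Hd; rewrite Hright by exact Hd; ring|].
    intros k. apply (Hweight IZR). rewrite Hk, Rabs_Ropp, Rabs_right by (specialize (Hk1 k); lra).
    specialize (Hk1 k). nra.
  - apply (summableZ_of_tail _ rho N Hrho); [intros d Hd; rewrite Hright by exact Hd; ring|].
    intros k. apply (Hweight (fun d => IZR d ^ 2)). rewrite Hk, Rabs_right.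
    + lra.
    + apply Rle_ge. specialize (Hk1 k). nra.
Qed.

(** * Digit sums *)

Definition carry (B t a : nat) : nat := ((a + t) / B)%nat.

Lemma carry_one B a : (a < B)%nat -> carry B 1 a = (if a =? B - 1 then 1 else 0)%nat.
Proof.
  intros Ha. unfold carry. destruct (Nat.eqb_spec a (B - 1)) as [->|Hne].
  - replace (B - 1 + 1)%nat with B by lia. apply Nat.div_same. lia.
  - apply Nat.div_small. lia.
Qed.

Lemma Delta_0 b n : Delta b 0 n = 0%Z.
Proof. unfold Delta. rewrite Nat.add_0_r. lia. Qed.

Section Digits.
Variable b : nat.
Hypothesis Hb : (2 <= b)%nat.
Local Open Scope nat_scope.

Lemma digsum_aux_0 f : digsum_aux b f 0 = 0.
Proof.
  induction f as [|f IH]; simpl; [reflexivity|].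
  rewrite Nat.Div0.mod_0_l, Nat.Div0.div_0_l, IH. reflexivity.
Qed.

Lemma digsum_aux_fuel f1 f2 n : n <= f1 -> n <= f2 ->
  digsum_aux b f1 n = digsum_aux b f2 n.
Proof.
  revert f2 n; induction f1 as [|f1 IH]; intros f2 n H1 H2.
  - replace n with 0 by lia. rewrite !digsum_aux_0. reflexivity.
  - destruct (Nat.eq_dec n 0) as [->|Hn]; [rewrite !digsum_aux_0; reflexivity|].
    destruct f2 as [|f2]; [lia|]. simpl. f_equal.
    assert (n / b < n) by (apply Nat.div_lt; lia).
    apply IH; lia.
Qed.

Lemma digsum_step n : digsum b n = n mod b + digsum b (n / b).
Proof.
  unfold digsum. destruct n as [|n].
  - simpl. rewrite Nat.Div0.mod_0_l, Nat.Div0.div_0_l. reflexivity.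
  - simpl. f_equal. assert (S n / b < S n) by (apply Nat.div_lt; lia).
    apply digsum_aux_fuel; lia.
Qed.

Lemma digsum_digit x : x < b -> digsum b x = x.
Proof.
  intros Hx. rewrite digsum_step, Nat.mod_small, Nat.div_small by lia. cbn. lia.
Qed.

Lemma digsum_blocks m x y : y < b ^ m ->
  digsum b (b ^ m * x + y) = digsum b x + digsum b y.
Proof.
  revert x y; induction m as [|m IH]; intros x y Hy.
  - simpl in *. replace y with 0 by lia. rewrite !Nat.add_0_r. reflexivity.
  - assert (Hlow : y mod b < b) by (apply Nat.mod_upper_bound; lia).
    assert (Hhigh : y / b < b ^ m) by (apply Nat.Div0.div_lt_upper_bound; simpl in Hy; lia).
    rewrite (Nat.div_mod y b) at 1 by lia.
    replace (b ^ S m * x + (b * (y / b) + y mod b))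
      with (y mod b + (b ^ m * x + y / b) * b) by (simpl; ring).
    rewrite digsum_step, Nat.Div0.mod_add, Nat.div_add, Nat.mod_small, Nat.div_small by lia.
    rewrite Nat.add_0_l, IH by exact Hhigh.
    rewrite (digsum_step y). lia.
Qed.

Definition low_delta (B t a : nat) : Z :=
  (Z.of_nat (digsum b ((a + t) mod B)) - Z.of_nat (digsum b a))%Z.

(* Adding [b^m r' + t] to [b^m q + a] adds [t] to the low block [a], which
   becomes [(a + t) mod b^m] and carries [(a + t) / b^m] into the high part. *)
Lemma Delta_block (m r' t q a : nat) : a < b ^ m ->
  Delta b (b ^ m * r' + t) (b ^ m * q + a) =
  (low_delta (b ^ m) t a + Delta b (r' + carry (b ^ m) t a) q)%Z.
Proof.
  intros Ha. unfold Delta, low_delta, carry.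
  assert (HB : b ^ m <> 0) by (apply Nat.pow_nonzero; lia).
  pose proof (Nat.div_mod (a + t) (b ^ m) HB).
  pose proof (Nat.mod_upper_bound (a + t) (b ^ m) HB).
  replace (b ^ m * q + a + (b ^ m * r' + t))
    with (b ^ m * (q + (r' + (a + t) / b ^ m)) + (a + t) mod b ^ m) by lia.
  rewrite !digsum_blocks by assumption. lia.
Qed.

Lemma low_delta_one a : a < b ->
  low_delta b 1 a = (if (a =? b - 1)%nat then - Z.of_nat (b - 1) else 1)%Z.
Proof.
  intros Ha. unfold low_delta. destruct (Nat.eqb_spec a (b - 1)) as [->|Hne].
  - replace (b - 1 + 1) with b by lia.
    rewrite Nat.Div0.mod_same, (digsum_digit (b - 1)) by lia. reflexivity.
  - rewrite Nat.mod_small, !digsum_digit by lia. lia.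
Qed.

Lemma Delta_1_le n : (Delta b 1 n <= 1)%Z.
Proof.
  induction n as [n IH] using lt_wf_ind.
  pose proof (Nat.mod_upper_bound n b ltac:(lia)).
  pose proof (Delta_block 1 0 1 (n / b) (n mod b)) as Hblock.
  rewrite Nat.pow_1_r, Nat.mul_0_r, Nat.add_0_l, <- Nat.div_mod in Hblock by lia.
  rewrite Hblock by assumption.
  rewrite carry_one, low_delta_one by assumption.
  destruct (Nat.eqb_spec (n mod b) (b - 1)) as [Hlast|]; simpl.
  - assert (Hlt : n / b < n).
    { apply Nat.div_lt; [|lia]. destruct n; [rewrite Nat.Div0.mod_0_l in Hlast|]; lia. }
    specialize (IH _ Hlt). lia.
  - rewrite Delta_0. lia.
Qed.

End Digits.

Lemma one_minus_pow_ge x n : 0 <= x <= 1 -> 1 - INR n * x <= (1 - x) ^ n.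
Proof.
  intros Hx. induction n as [|n IH]; [simpl; lra|].
  rewrite S_INR. simpl. pose proof (pos_INR n).
  assert (0 <= x * (INR n * x)) by (apply Rmult_le_pos; [|apply Rmult_le_pos]; lra).
  assert ((1 - x) * (1 - INR n * x) <= (1 - x) * (1 - x) ^ n)
    by (apply Rmult_le_compat_l; lra).
  nra.
Qed.

Lemma eqb_add_shift (x y d : Z) : Z.eqb (x + y) d = Z.eqb y (d - x).
Proof. destruct (Z.eqb_spec (x + y) d), (Z.eqb_spec y (d - x)); lia. Qed.

(** * Densities of the measures [mu] *)

Section Densities.
Variable b : nat.
Hypothesis Hb : (2 <= b)%nat.

Definition freq (r : nat) (d : Z) (N : nat) : R := INR (count_Delta b r d N) / INR N.

Lemma freq_avg r d N :
  freq r d N = avg (fun n => if (Delta b r n =? d)%Z then 1 else 0) N.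
Proof.
  unfold freq, avg, count_Delta. f_equal.
  induction N as [|N IH]; [reflexivity|].
  rewrite seq_S, filter_app, length_app, plus_INR, IH. simpl.
  destruct (Delta b r N =? d)%Z; simpl; ring.
Qed.

Definition has_density (r : nat) : Prop := forall d, ex_finite_lim_seq (freq r d).

Lemma mu_of_lim r d (l : R) : is_lim_seq (freq r d) l -> mu b r d = l.
Proof. intros H. unfold mu. fold (freq r d). rewrite (is_lim_seq_unique _ _ H). reflexivity. Qed.

Lemma mu_bounds r d : ex_finite_lim_seq (freq r d) -> 0 <= mu b r d <= 1.
Proof.
  intros [l Hl]. rewrite (mu_of_lim _ _ _ Hl).
  assert (Hfreq : forall N, 0 <= freq r d N <= 1).
  { intros N. rewrite freq_avg. apply avg_bounds. intros i. destruct (_ =? _)%Z; lra. }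
  split.
  - apply (is_lim_seq_le (fun _ => 0) (freq r d) 0 l); [apply Hfreq|apply is_lim_seq_const|exact Hl].
  - apply (is_lim_seq_le (freq r d) (fun _ => 1) l 1); [apply Hfreq|exact Hl|apply is_lim_seq_const].
Qed.

Section Block.
Variables (m r' t : nat).

Let B := (b ^ m)%nat.
Let comp (a : nat) : nat := (r' + carry B t a)%nat.
Let shift (a : nat) : Z := low_delta b B t a.

Lemma is_lim_seq_freq_block d :
  (forall a, (a < B)%nat -> ex_finite_lim_seq (freq (comp a) (d - shift a))) ->
  is_lim_seq (freq (B * r' + t) d) (/ INR B * rsum (fun a => mu b (comp a) (d - shift a)) B).
Proof.
  intros Hcomp.
  apply (is_lim_seq_ext (avg (fun n => if (Delta b (B * r' + t) n =? d)%Z then 1 else 0))).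
  { intros N. symmetry. apply freq_avg. }
  apply is_lim_seq_avg_residues.
  - intros n. destruct (_ =? _)%Z; lra.
  - apply Nat.neq_0_lt_0, Nat.pow_nonzero. lia.
  - intros a Ha. destruct (Hcomp a Ha) as [l Hl]. rewrite (mu_of_lim _ _ _ Hl).
    apply (is_lim_seq_ext (freq (comp a) (d - shift a))); [|exact Hl].
    intros M. rewrite freq_avg. unfold avg. f_equal. apply rsum_ext. intros q _.
    unfold B. rewrite Delta_block, eqb_add_shift by assumption. reflexivity.
Qed.

Lemma mu_block d :
  (forall a, (a < B)%nat -> ex_finite_lim_seq (freq (comp a) (d - shift a))) ->
  mu b (B * r' + t) d = / INR B * rsum (fun a => mu b (comp a) (d - shift a)) B.
Proof. intros H. apply mu_of_lim, is_lim_seq_freq_block, H. Qed.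

End Block.

Lemma is_lim_seq_freq_0 d : is_lim_seq (freq 0 d) (Finite (if (d =? 0)%Z then 1 else 0)).
Proof.
  set (c := if (d =? 0)%Z then 1 else 0).
  apply is_lim_seq_ext_loc with (u := fun _ => c); [|apply is_lim_seq_const].
  exists 1%nat. intros N HN. rewrite freq_avg. unfold avg.
  rewrite (rsum_ext _ (fun _ => c)).
  - rewrite rsum_const. field. apply not_0_INR. lia.
  - intros n _. unfold c. rewrite Delta_0, Z.eqb_sym. reflexivity.
Qed.

Lemma mu_0 d : mu b 0 d = if (d =? 0)%Z then 1 else 0.
Proof. apply mu_of_lim, is_lim_seq_freq_0. Qed.

Lemma is_lim_seq_freq_1_ge2 d : (2 <= d)%Z -> is_lim_seq (freq 1 d) 0.
Proof.
  intros Hd. apply (is_lim_seq_ext (fun _ => 0)); [|apply is_lim_seq_const].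
  intros N. rewrite freq_avg. unfold avg.
  rewrite (rsum_ext _ (fun _ => 0)), rsum_const; [unfold Rdiv; ring|].
  intros n _. pose proof (Delta_1_le b Hb n). destruct (Z.eqb_spec (Delta b 1 n) d); [lia|reflexivity].
Qed.

Lemma rsum_carry_one (h : nat -> Z -> R) :
  rsum (fun a => h (carry b 1 a) (low_delta b b 1 a)) b
  = (INR b - 1) * h 0%nat 1%Z + h 1%nat (- Z.of_nat (b - 1))%Z.
Proof.
  rewrite (rsum_split_last _ (fun _ => h 0%nat 1%Z)); [|lia|].
  - rewrite rsum_const, carry_one, low_delta_one, Nat.eqb_refl, minus_INR by lia.
    simpl. ring.
  - intros a Ha. rewrite carry_one, low_delta_one by lia.
    replace (a =? b - 1) with false by (symmetry; apply Nat.eqb_neq; lia). reflexivity.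
Qed.

Lemma is_lim_seq_freq_1 d :
  ex_finite_lim_seq (freq 1 (d + Z.of_nat (b - 1))) ->
  is_lim_seq (freq 1 d)
    (/ INR b * ((INR b - 1) * mu b 0 (d - 1) + mu b 1 (d + Z.of_nat (b - 1)))).
Proof.
  intros Hlast. pose proof (is_lim_seq_freq_block 1 0 1 d) as Hblock.
  rewrite Nat.pow_1_r in Hblock. replace (b * 0 + 1)%nat with 1%nat in Hblock by lia.
  cbn [Nat.add] in Hblock.
  rewrite (rsum_carry_one (fun r e => mu b r (d - e))) in Hblock.
  replace (d - - Z.of_nat (b - 1))%Z with (d + Z.of_nat (b - 1))%Z in Hblock by lia.
  apply Hblock. intros a Ha. rewrite carry_one, low_delta_one by assumption.
  destruct (a =? b - 1).
  - replace (d - - Z.of_nat (b - 1))%Z with (d + Z.of_nat (b - 1))%Z by lia. exact Hlast.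
  - eexists. apply is_lim_seq_freq_0.
Qed.

Lemma has_density_1 : has_density 1.
Proof.
  intros d. remember (Z.to_nat (2 - d)) as n eqn:Hn. revert d Hn.
  induction n as [n IH] using lt_wf_ind. intros d Hn.
  destruct (Z_le_gt_dec 2 d).
  - eexists. apply is_lim_seq_freq_1_ge2. assumption.
  - eexists. apply is_lim_seq_freq_1. apply (IH (Z.to_nat (2 - (d + Z.of_nat (b - 1))))); lia.
Qed.

Lemma mu_1_mixture d :
  mu b 1 d = / INR b * ((INR b - 1) * mu b 0 (d - 1) + mu b 1 (d + Z.of_nat (b - 1))).
Proof. apply mu_of_lim, is_lim_seq_freq_1, has_density_1. Qed.

Lemma mu_1_ge2 d : (2 <= d)%Z -> mu b 1 d = 0.
Proof. intros Hd. apply mu_of_lim, is_lim_seq_freq_1_ge2, Hd. Qed.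

Lemma mu_1_nonpos d : (d <= 0)%Z -> mu b 1 d = / INR b * mu b 1 (d + Z.of_nat (b - 1)).
Proof.
  intros Hd. rewrite mu_1_mixture, mu_0.
  replace (d - 1 =? 0)%Z with false by (symmetry; apply Z.eqb_neq; lia). ring.
Qed.

(* Each block of [b - 1] steps to the left costs a factor [1/b] by [mu_1_nonpos],
   and [(1 - 1/b)^(b-1) >= 1/b] by Bernoulli's inequality. *)
Lemma mu_1_tail j : mu b 1 (- Z.of_nat j) <= (1 - / INR b) ^ j.
Proof.
  set (rho := 1 - / INR b).
  assert (HbR : 2 <= INR b) by (apply (le_INR 2); assumption).
  assert (Hinv : 0 < / INR b <= / 2) by (split; [apply Rinv_0_lt_compat|apply Rinv_le_contravar]; lra).
  assert (Hrho : 0 < rho < 1) by (unfold rho; lra).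
  assert (Hbern : / INR b <= rho ^ (b - 1)).
  { pose proof (one_minus_pow_ge (/ INR b) (b - 1) ltac:(lra)) as H.
    rewrite minus_INR in H by lia. simpl in H.
    replace (1 - (INR b - 1) * / INR b) with (/ INR b) in H by (field; lra). exact H. }
  induction j as [j IH] using lt_wf_ind.
  rewrite mu_1_nonpos by lia.
  destruct (le_lt_dec (b - 1) j) as [Hbig|Hsmall].
  - replace (- Z.of_nat j + Z.of_nat (b - 1))%Z with (- Z.of_nat (j - (b - 1)))%Z by lia.
    specialize (IH (j - (b - 1))%nat ltac:(lia)).
    pose proof (mu_bounds 1 _ (has_density_1 (- Z.of_nat (j - (b - 1)))%Z)).
    replace j with ((b - 1) + (j - (b - 1)))%nat at 2 by lia. rewrite pow_add.
    apply Rmult_le_compat; lra.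
  - pose proof (mu_bounds 1 _ (has_density_1 (- Z.of_nat j + Z.of_nat (b - 1))%Z)).
    assert (rho ^ (b - 1) <= rho ^ j).
    { replace (b - 1)%nat with (j + (b - 1 - j))%nat by lia. rewrite pow_add.
      pose proof (pow_lt rho j ltac:(lra)).
      destruct (b - 1 - j)%nat as [|k] eqn:E; [simpl; lra|].
      pose proof (pow_lt_1_compat rho (S k) ltac:(lra) ltac:(lia)). nra. }
    nra.
Qed.

End Densities.

(** * Moments of the measures [mu] *)

Lemma rsum_low_delta b B t : (0 < B)%nat -> rsum (fun a => IZR (low_delta b B t a)) B = 0.
Proof.
  intros HB. unfold low_delta.
  rewrite (rsum_ext _ (fun a => INR (digsum b ((a + t) mod B)) - INR (digsum b a))).
  - rewrite rsum_minus, (rsum_rot (fun x => INR (digsum b x))) by assumption. ring.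
  - intros a _. rewrite minus_IZR, <- !INR_IZR_INZ. reflexivity.
Qed.

Section Regularity.
Variable b : nat.
Hypothesis Hb : (2 <= b)%nat.

Section Block.
Variables (m r' t : nat).

Let B := (b ^ m)%nat.
Let comp (a : nat) : nat := (r' + carry B t a)%nat.
Let shift (a : nat) : Z := low_delta b B t a.

Lemma moments_block :
  (forall a, (a < B)%nat -> has_density b (comp a) /\ finite_moments (mu b (comp a))) ->
  let G := mu b (B * r' + t) in
  has_density b (B * r' + t) /\ finite_moments G /\
  mass G = / INR B * rsum (fun a => mass (mu b (comp a))) B /\
  first_moment G =
    / INR B * rsum (fun a => first_moment (mu b (comp a)) + IZR (shift a) * mass (mu b (comp a))) B /\
  second_moment G = / INR B * rsum (fun a => second_moment (mu b (comp a))
     + 2 * IZR (shift a) * first_moment (mu b (comp a)) + IZR (shift a) ^ 2 * mass (mu b (comp a))) B.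
Proof.
  intros Hcomp G.
  assert (Hdens : has_density b (B * r' + t)).
  { intros d. eexists. apply is_lim_seq_freq_block; [exact Hb|].
    intros a Ha. apply Hcomp, Ha. }
  split; [exact Hdens|].
  apply moments_mixture; [|intros a Ha; apply Hcomp, Ha].
  intros d. apply mu_block; [exact Hb|]. intros a Ha. apply Hcomp, Ha.
Qed.

End Block.

Lemma moments_mu_0 :
  finite_moments (mu b 0) /\ mass (mu b 0) = 1 /\ first_moment (mu b 0) = 0 /\
  second_moment (mu b 0) = 0.
Proof.
  assert (Hpoint : forall w : Z -> R, summableZ (fun d => w d * mu b 0 d) /\
                     sumZ (fun d => w d * mu b 0 d) = w 0%Z).
  { intros w. assert (Hm0 : mu b 0 0%Z = 1) by (rewrite (mu_0 b Hb); reflexivity).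
    rewrite <- (Rmult_1_r (w 0%Z)), <- Hm0.
    apply sumZ_point. intros d Hd. rewrite (mu_0 b Hb).
    replace (d =? 0)%Z with false by (symmetry; apply Z.eqb_neq, Hd). ring. }
  destruct (Hpoint (fun _ => 1)) as [S0 E0].
  destruct (Hpoint IZR) as [S1 E1].
  destruct (Hpoint (fun d => IZR d ^ 2)) as [S2 E2].
  assert (M : forall d, 1 * mu b 0 d = mu b 0 d) by (intros; ring).
  unfold mass, first_moment, second_moment. rewrite <- (sumZ_ext _ _ M), E0, E1, E2.
  split; [|split; [reflexivity|split; simpl; ring]].
  split; [exact (summableZ_ext _ _ M S0)|split; assumption].
Qed.

Lemma finite_moments_mu_1 : finite_moments (mu b 1).
Proof.
  assert (HbR : 2 <= INR b) by (apply (le_INR 2); assumption).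
  assert (Hinv : 0 < / INR b <= / 2) by (split; [apply Rinv_0_lt_compat|apply Rinv_le_contravar]; lra).
  apply (finite_moments_of_tail _ (1 - / INR b) 2); [lra| | |].
  - intros d. apply (mu_bounds b 1 d), (has_density_1 b Hb).
  - intros d Hd. apply (mu_1_ge2 b Hb). lia.
  - intros k. replace (- Z.of_nat k - 1)%Z with (- Z.of_nat (S k))%Z by lia.
    eapply Rle_trans; [apply (mu_1_tail b Hb)|]. simpl.
    pose proof (pow_le (1 - / INR b) k ltac:(lra)). nra.
Qed.

Lemma moments_mu_1 :
  mass (mu b 1) = 1 /\ first_moment (mu b 1) = 0 /\ second_moment (mu b 1) = INR b.
Proof.
  destruct moments_mu_0 as [F0 [M0 [E0 V0]]].
  destruct (moments_block 1 0 1) as [_ [_ [Hmass [Hfirst Hsecond]]]].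
  { rewrite Nat.pow_1_r. intros a Ha. rewrite carry_one by assumption.
    destruct (a =? b - 1).
    - split; [exact (has_density_1 b Hb)|exact finite_moments_mu_1].
    - split; [intros d; eexists; apply (is_lim_seq_freq_0 b Hb)|exact F0]. }
  replace (b ^ 1 * 0 + 1)%nat with 1%nat in * by lia. rewrite Nat.pow_1_r in *.
  cbn [Nat.add] in Hmass, Hfirst, Hsecond.
  rewrite (rsum_carry_one b Hb (fun r _ => mass (mu b r))) in Hmass.
  rewrite (rsum_carry_one b Hb (fun r e => first_moment (mu b r) + IZR e * mass (mu b r))) in Hfirst.
  rewrite (rsum_carry_one b Hb (fun r e => second_moment (mu b r) + 2 * IZR e * first_moment (mu b r)
                                       + IZR e ^ 2 * mass (mu b r))) in Hsecond.
  assert (HbR : 2 <= INR b) by (apply (le_INR 2); assumption).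
  assert (Hb1 : IZR (- Z.of_nat (b - 1)) = - (INR b - 1))
    by (rewrite opp_IZR, <- INR_IZR_INZ, minus_INR by lia; reflexivity).
  rewrite M0, E0, V0, Hb1 in *.
  assert (Hclear : forall x y, x = / INR b * y -> INR b * x = y) by (intros x y ->; field; lra).
  apply Hclear in Hmass, Hfirst, Hsecond.
  assert (Hm1 : mass (mu b 1) = 1)
    by (apply (Rmult_eq_reg_l (INR b - 1)); [lra|lra]).
  rewrite Hm1 in Hfirst, Hsecond.
  assert (He1 : first_moment (mu b 1) = 0)
    by (apply (Rmult_eq_reg_l (INR b - 1)); [lra|lra]).
  rewrite He1 in Hsecond.
  split; [exact Hm1|split; [exact He1|]].
  apply (Rmult_eq_reg_l (INR b - 1)); [nra|lra].
Qed.

Lemma carry_lt r a : (2 <= r)%nat -> (a < b)%nat ->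
  (r / b + carry b (r mod b) a < r)%nat.
Proof.
  intros Hr Ha. unfold carry.
  pose proof (Nat.div_mod r b ltac:(lia)). pose proof (Nat.mod_upper_bound r b ltac:(lia)).
  assert (Hc : ((a + r mod b) / b <= 1)%nat)
    by (apply Nat.lt_succ_r, Nat.Div0.div_lt_upper_bound; lia).
  destruct (Nat.eq_dec (r mod b) 0) as [Ht|Ht].
  - rewrite Ht, Nat.add_0_r, (Nat.div_small a b Ha). nia.
  - nia.
Qed.

Lemma mu_regular r :
  has_density b r /\ finite_moments (mu b r) /\ mass (mu b r) = 1 /\ first_moment (mu b r) = 0.
Proof.
  induction r as [r IH] using lt_wf_ind.
  destruct r as [|[|r0]].
  - destruct moments_mu_0 as [F0 [M0 [E0 _]]].
    split; [intros d; eexists; apply (is_lim_seq_freq_0 b Hb)|auto].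
  - destruct moments_mu_1 as [M1 [E1 _]].
    split; [exact (has_density_1 b Hb)|split; [exact finite_moments_mu_1|auto]].
  - set (r := S (S r0)) in *.
    assert (Hr : r = (b ^ 1 * (r / b) + r mod b)%nat)
      by (rewrite Nat.pow_1_r; apply Nat.div_mod; lia).
    assert (Hcomp : forall a, (a < b ^ 1)%nat -> (r / b + carry (b ^ 1) (r mod b) a < r)%nat)
      by (rewrite Nat.pow_1_r; intros a Ha; apply carry_lt; [unfold r; lia|assumption]).
    destruct (moments_block 1 (r / b) (r mod b)) as [Hd [Hm [Hmass [Hfirst _]]]].
    { intros a Ha. destruct (IH _ (Hcomp a Ha)) as [? [? _]]. split; assumption. }
    rewrite Hr. split; [exact Hd|split; [exact Hm|split]].
    + rewrite Hmass, (rsum_ext _ (fun _ => 1)), rsum_const.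
      * field. apply not_0_INR, Nat.pow_nonzero. lia.
      * intros a Ha. destruct (IH _ (Hcomp a Ha)) as [_ [_ [? _]]]. assumption.
    + rewrite Hfirst, (rsum_ext _ (fun a => IZR (low_delta b (b ^ 1) (r mod b) a))).
      * rewrite rsum_low_delta; [ring|]. apply Nat.neq_0_lt_0, Nat.pow_nonzero. lia.
      * intros a Ha. destruct (IH _ (Hcomp a Ha)) as [_ [_ [M E]]]. rewrite M, E. ring.
Qed.

Lemma second_moment_block_one m rh : (1 <= m)%nat ->
  second_moment (mu b (b ^ m * rh + 1)) =
  / INR (b ^ m) * ((INR (b ^ m) - 1) * second_moment (mu b rh) + second_moment (mu b (rh + 1))
                   + rsum (fun a => IZR (low_delta b (b ^ m) 1 a) ^ 2) (b ^ m)).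
Proof.
  intros Hm.
  assert (HB : (2 <= b ^ m)%nat).
  { replace m with (S (m - 1)) by lia. simpl. pose proof (Nat.pow_nonzero b (m - 1)). nia. }
  destruct (moments_block m rh 1) as [_ [_ [_ [_ Hsecond]]]].
  { intros a _. destruct (mu_regular (rh + carry (b ^ m) 1 a)) as [? [? _]]. split; assumption. }
  rewrite Hsecond. f_equal.
  rewrite (rsum_ext _ (fun a => second_moment (mu b (rh + carry (b ^ m) 1 a))
                                + IZR (low_delta b (b ^ m) 1 a) ^ 2)).
  2:{ intros a _. destruct (mu_regular (rh + carry (b ^ m) 1 a)) as [_ [_ [M E]]].
      rewrite M, E. ring. }
  rewrite rsum_plus. f_equal.
  rewrite (rsum_split_last _ (fun _ => second_moment (mu b rh))); [|lia|].
  - rewrite rsum_const, carry_one, Nat.eqb_refl, minus_INR by lia. simpl. ring.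
  - intros a Ha. rewrite carry_one by lia.
    replace (a =? b ^ m - 1) with false by (symmetry; apply Nat.eqb_neq; lia).
    rewrite Nat.add_0_r. reflexivity.
Qed.

(* The case [rh = 0] of [second_moment_block_one], where both sides are known. *)
Lemma rsum_low_delta_sq m : (1 <= m)%nat ->
  rsum (fun a => IZR (low_delta b (b ^ m) 1 a) ^ 2) (b ^ m) = (INR (b ^ m) - 1) * INR b.
Proof.
  intros Hm. pose proof (second_moment_block_one m 0 Hm) as H.
  replace (b ^ m * 0 + 1)%nat with 1%nat in H by lia. change (0 + 1)%nat with 1%nat in H.
  destruct moments_mu_0 as [_ [_ [_ V0]]]. destruct moments_mu_1 as [_ [_ V1]].
  rewrite V0, V1 in H.
  assert (HB : 1 <= INR (b ^ m))
    by (apply (le_INR 1); pose proof (Nat.pow_nonzero b m); lia).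
  apply (Rmult_eq_compat_l (INR (b ^ m))) in H.
  rewrite <- Rmult_assoc, Rinv_r, Rmult_1_l in H by lra. lra.
Qed.

End Regularity.

Theorem mainTheorem13 (b : nat) (Hb : (2 <= b)%nat) (rh m : nat) (Hm : (1 <= m)%nat) :
  VarMu (mu b (b ^ m * rh + 1)%nat) =
    (1 - 1 / INR b ^ m) * VarMu (mu b rh)
    + 1 / INR b ^ m * VarMu (mu b (rh + 1)%nat)
    + INR b - 1 / INR b ^ (m - 1).
Proof.
  change (VarMu ?F) with (second_moment F - first_moment F ^ 2).
  destruct (mu_regular b Hb (b ^ m * rh + 1)) as [_ [_ [_ ->]]].
  destruct (mu_regular b Hb rh) as [_ [_ [_ ->]]].
  destruct (mu_regular b Hb (rh + 1)) as [_ [_ [_ ->]]].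
  rewrite second_moment_block_one, rsum_low_delta_sq, pow_INR by assumption.
  assert (HbR : 2 <= INR b) by (apply (le_INR 2); assumption).
  assert (Hpow : INR b ^ m = INR b * INR b ^ (m - 1))
    by (replace m with (S (m - 1)) at 1 by lia; reflexivity).
  pose proof (pow_lt (INR b) (m - 1) ltac:(lra)).
  rewrite Hpow. field. lra.
Qed.
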